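(* Let $\alpha\in\mathbb{C}$ with $\Re(\alpha)>-1/2$ and $\alpha\neq0$. Then for every $n\in\mathbb{N}_0$, $$p_n(x;\alpha)=\sum_{\nu=0}^{n}\left\{\frac{2^{\nu+1}(\alpha+1/2)_\nu}{\nu!}\sum_{\mu=0}^{\nu}\binom{\nu}{\mu}\frac{(-1)^{\mu}\,\Gamma(2\alpha+\mu)}{\Gamma(2\alpha+\mu+\nu+1)}(\alpha+\mu)^{2n+1}\right\}x^{\nu}.$$
   Context: Let $\mathcal{A}$ be the differential operator $\mathcal{A}f(x)=-x^2f''(x)-xf'(x)+x^2f(x)$ on functions of $x>0$, with iterates $\mathcal{A}^n$ ($\mathcal{A}^0$ = identity). For $\alpha\in\mathbb{C}$, $n\in\mathbb{N}_0$, $p_n(x;\alpha)=(-1)^n e^{x}x^{-\alpha}\,\mathcal{A}^n\big(e^{-x}x^{\alpha}\big)$ (a polynomial in $x$ of degree $n$ when $\Re(\alpha)>-1/2$). $(y)_\nu$ is the Pochhammer symbol, $(y)_0=1$, $(y)_\nu=\prod_{j=0}^{\nu-1}(y+j)$. *)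

From Stdlib Require Import Reals Arith Factorial.
Open Scope R_scope.

Definition Cx : Type := (R * R)%type.
Definition Re (z : Cx) : R := fst z.
Definition Im (z : Cx) : R := snd z.
Definition CR (r : R) : Cx := (r, 0).
Definition Cadd (z w : Cx) : Cx := (fst z + fst w, snd z + snd w).
Definition Cneg (z : Cx) : Cx := (- fst z, - snd z).
Definition Cmul (z w : Cx) : Cx :=
  (fst z * fst w - snd z * snd w, fst z * snd w + snd z * fst w).
Definition Cscale (r : R) (z : Cx) : Cx := (r * fst z, r * snd z).
Definition Cinv (z : Cx) : Cx :=
  (fst z / (fst z ^ 2 + snd z ^ 2), - snd z / (fst z ^ 2 + snd z ^ 2)).
Fixpoint Cpow (z : Cx) (n : nat) : Cx :=
  match n with O => CR 1 | S k => Cmul z (Cpow z k) end.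

Fixpoint Csum (f : nat -> Cx) (n : nat) : Cx :=
  match n with O => f O | S k => Cadd (Csum f k) (f (S k)) end.

Fixpoint Cpoch (y : Cx) (k : nat) : Cx :=
  match k with O => CR 1 | S j => Cmul (Cpoch y j) (Cadd y (CR (INR j))) end.

(* principal power x^a = exp(a ln x) for real x > 0 and complex a *)
Definition cpow_real (x : R) (a : Cx) : Cx :=
  (exp (Re a * ln x) * cos (Im a * ln x), exp (Re a * ln x) * sin (Im a * ln x)).

Definition Cderiv (f : R -> Cx) (x : R) (d : Cx) : Prop :=
  derivable_pt_lim (fun t => fst (f t)) x (fst d) /\
  derivable_pt_lim (fun t => snd (f t)) x (snd d).

(* The operator  A h (x) = - x^2 h''(x) - x h'(x) + x^2 h(x)  given h' = h1, h'' = h2 *)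
Definition Aop (h h1 h2 : R -> Cx) (x : R) : Cx :=
  Cadd (Cadd (Cscale (- x ^ 2) (h2 x)) (Cscale (- x) (h1 x))) (Cscale (x ^ 2) (h x)).

(* Aiter f n g  :<->  g = A^n f on (0,oo), all required derivatives existing on (0,oo). *)
Inductive Aiter (f : R -> Cx) : nat -> (R -> Cx) -> Prop :=
| Aiter0 : Aiter f O f
| AiterS : forall n g g1 g2,
    Aiter f n g ->
    (forall x, 0 < x -> Cderiv g x (g1 x)) ->
    (forall x, 0 < x -> Cderiv g1 x (g2 x)) ->
    Aiter f (S n) (Aop g g1 g2).

Definition seed (alpha : Cx) (x : R) : Cx := Cscale (exp (- x)) (cpow_real x alpha).

(* coefficient of x^nu in the claimed formula; Gamma(2a+mu)/Gamma(2a+mu+nu+1)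
   is written as 1/(2a+mu)_{nu+1} *)
Definition coef (alpha : Cx) (n nu : nat) : Cx :=
  Cmul (Cscale (2 ^ (nu + 1) / INR (fact nu)) (Cpoch (Cadd alpha (CR (1/2))) nu))
    (Csum (fun mu =>
        Cscale (Binomial.C nu mu * (-1) ^ mu)
          (Cmul (Cinv (Cpoch (Cadd (Cscale 2 alpha) (CR (INR mu))) (nu + 1)))
                (Cpow (Cadd alpha (CR (INR mu))) (2 * n + 1)))) nu).

(* Write [A^n (e^{-x} x^alpha) = (-1)^n e^{-x} x^alpha P_n(x)]. Conjugating [-A] by
   [e^{-x} x^alpha] gives [P |-> x^2 P'' + ((2 alpha + 1) x - 2 x^2) P' + (alpha^2 - (2 alpha + 1) x) P],
   which maps coefficients by [c_0 |-> alpha^2 c_0],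
   [c_k |-> (alpha + k)^2 c_k - (2k + 2 alpha - 1) c_{k-1}]. So it suffices that the claimed
   coefficients obey this recurrence in [n] and equal [delta_{0 nu}] at [n = 0]. The recurrence
   follows from [(alpha + mu)^2 = (alpha + nu)^2 + (mu - nu)(2 alpha + mu + nu)] and binomial
   absorption, the initial values from
   [sum_mu (-1)^mu C(nu, mu) / (t + mu)_k = (k)_nu / (t)_{k + nu}].
   The hypotheses on [alpha] only keep [2 alpha] off the non-positive integers. *)

From Stdlib Require Import Reals Factorial Lra Lia.
From Coquelicot Require Import Coquelicot.
From Pilot Require Import Defs.
Open Scope R_scope.

(* [ring] and [field] read the carrier off the type of the left-hand side, which
   for [Cpoch], [Csum], ... is the alias [Cx]; prefixing [0 +] makes it [C]. *)
Lemma Ceq_plus0_l (a b : C) : (RtoC 0 + a = RtoC 0 + b)%C -> a = b.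
Proof. now rewrite !Cplus_0_l. Qed.

Ltac toC := apply Ceq_plus0_l;
  change Cmul with Cmult; change Cadd with Cplus; change CR with RtoC;
  change Cneg with Copp; change Defs.Cinv with Complex.Cinv.
Ltac Cring := toC; ring.
Ltac Cfield := toC; field.

Lemma Cscale_RtoC r z : Cscale r z = (RtoC r * z)%C.
Proof. destruct z as [a b]; unfold Cscale, RtoC, Cmult; simpl; f_equal; ring. Qed.

Lemma RtoC_INR_S k : RtoC (INR (S k)) = (RtoC (INR k) + RtoC 1)%C.
Proof. now rewrite S_INR, RtoC_plus. Qed.

Lemma RtoC_INR_neq0 k : (0 < k)%nat -> RtoC (INR k) <> RtoC 0.
Proof. intros Hk E; apply RtoC_inj in E; apply (not_0_INR k); [lia | exact E]. Qed.

Lemma Cmult_neq0 (a b : C) : a <> RtoC 0 -> b <> RtoC 0 -> (a * b)%C <> RtoC 0.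
Proof.
  intros Ha Hb E; apply Ha.
  replace a with (a * b * / b)%C by (field; exact Hb). rewrite E; ring.
Qed.

Section FiniteSums.

Implicit Types (f g : nat -> C) (n : nat).

Lemma Csum_S f n : Csum f (S n) = (Csum f n + f (S n))%C.
Proof. reflexivity. Qed.

Lemma Csum_ext f g n : (forall k, (k <= n)%nat -> f k = g k) -> Csum f n = Csum g n.
Proof.
  induction n as [|n IH]; intros H; simpl.
  - apply H; lia.
  - rewrite IH, H by auto. reflexivity.
Qed.

Lemma Csum_plus f g n : Csum (fun k => f k + g k)%C n = (Csum f n + Csum g n)%C.
Proof. induction n as [|n IH]; simpl; [reflexivity | rewrite IH; Cring]. Qed.

Lemma Csum_mult_l c f n : Csum (fun k => c * f k)%C n = (c * Csum f n)%C.
Proof. induction n as [|n IH]; simpl; [reflexivity | rewrite IH; Cring]. Qed.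

Lemma Csum_minus f g n : Csum (fun k => f k - g k)%C n = (Csum f n - Csum g n)%C.
Proof. induction n as [|n IH]; simpl; [reflexivity | rewrite IH; Cring]. Qed.

Lemma Csum_shift f n : Csum f (S n) = (f 0%nat + Csum (fun k => f (S k)) n)%C.
Proof.
  induction n as [|n IH]; [reflexivity|].
  rewrite Csum_S, IH, (Csum_S (fun k => f (S k))). Cring.
Qed.

End FiniteSums.

Section Pochhammer.

Implicit Types (y : C) (k : nat).

Lemma Cpoch_S y k : Cpoch y (S k) = (Cpoch y k * (y + RtoC (INR k)))%C.
Proof. reflexivity. Qed.

Lemma Cpoch_S_l y k : Cpoch y (S k) = (y * Cpoch (y + RtoC 1) k)%C.
Proof.
  induction k as [|k IH].
  - cbn [Cpoch INR]. Cring.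
  - rewrite Cpoch_S, IH, Cpoch_S, RtoC_INR_S. Cring.
Qed.

Lemma Cpoch_neq0 y k :
  (forall j, (y + RtoC (INR j))%C <> RtoC 0) -> Cpoch y k <> RtoC 0.
Proof.
  intros H; induction k as [|k IH].
  - intro E; injection E; lra.
  - apply Cmult_neq0; auto.
Qed.

Lemma Cpoch_nat_double m :
  (RtoC 2 * Cpoch (RtoC (INR (S m))) (S m))%C = Cpoch (RtoC (INR (S (S m)))) (S m).
Proof.
  set (x := RtoC (INR (S m))).
  assert (Nx : x <> RtoC 0) by (apply RtoC_INR_neq0; lia).
  assert (E : (Cpoch x (S m) * (x + x))%C = (x * Cpoch (x + RtoC 1) (S m))%C).
  { rewrite <- Cpoch_S_l, Cpoch_S. reflexivity. }
  rewrite (RtoC_INR_S (S m)); fold x.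
  transitivity (/ x * (Cpoch x (S m) * (x + x)))%C; [Cfield; exact Nx|].
  rewrite E. Cfield. exact Nx.
Qed.

End Pochhammer.

(* Pascal's triangle; unlike [Binomial.C] it vanishes above the diagonal. *)
Fixpoint binomR (n k : nat) : R :=
  match n, k with
  | _, O => 1
  | O, S _ => 0
  | S n', S k' => binomR n' k' + binomR n' (S k')
  end.

Lemma binomR_n0 n : binomR n 0 = 1.
Proof. now destruct n. Qed.

Lemma binomR_gt n k : (n < k)%nat -> binomR n k = 0.
Proof.
  revert k; induction n as [|n IH]; intros [|k] H; simpl; try lia; auto.
  rewrite !IH by lia. ring.
Qed.

Lemma binomR_C n k : (k <= n)%nat -> binomR n k = Binomial.C n k.
Proof.
  assert (C_n0 : forall n, Binomial.C n 0 = 1).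
  { intro m. unfold Binomial.C. rewrite Nat.sub_0_r. simpl INR.
    field. apply INR_fact_neq_0. }
  assert (C_nn : forall n, Binomial.C n n = 1).
  { intro m. unfold Binomial.C. rewrite Nat.sub_diag. simpl INR.
    field. apply INR_fact_neq_0. }
  revert k; induction n as [|n IH]; intros [|k] H; simpl; try lia; rewrite ?C_n0; auto.
  destruct (Nat.eq_dec k n) as [->|Hk].
  - rewrite IH, binomR_gt, !C_nn by lia. ring.
  - rewrite !IH by lia. apply pascal. lia.
Qed.

Lemma binomR_absorb m mu :
  binomR (S m) mu * (INR mu - INR (S m)) = - (INR (S m) * binomR m mu).
Proof.
  destruct (Compare_dec.le_lt_dec mu m) as [H|H].
  - rewrite !binomR_C by lia. unfold Binomial.C.
    rewrite (Nat.sub_succ_l mu m H), !fact_simpl, !mult_INR.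
    replace (INR mu - INR (S m)) with (- INR (S (m - mu)))
      by (rewrite <- Ropp_minus_distr, <- minus_INR by lia; do 2 f_equal; lia).
    field. repeat split; apply INR_fact_neq_0 || (apply not_0_INR; lia).
  - destruct (Nat.eq_dec mu (S m)) as [->|Hm].
    + rewrite (binomR_gt m (S m)) by lia. ring.
    + rewrite !binomR_gt by lia. ring.
Qed.

Lemma Csum_binomR_S nu (g : nat -> C) :
  Csum (fun mu => RtoC (binomR (S nu) mu) * g mu)%C (S nu) =
  (Csum (fun mu => RtoC (binomR nu mu) * g mu)%C nu +
   Csum (fun mu => RtoC (binomR nu mu) * g (S mu))%C nu)%C.
Proof.
  assert (E : Csum (fun mu => RtoC (binomR nu mu) * g mu)%C (S nu) =
              Csum (fun mu => RtoC (binomR nu mu) * g mu)%C nu).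
  { rewrite Csum_S, binomR_gt by lia. Cring. }
  rewrite <- E, !Csum_shift, !binomR_n0.
  rewrite (Csum_ext _ (fun k => RtoC (binomR nu k) * g (S k) + RtoC (binomR nu (S k)) * g (S k))%C).
  - rewrite Csum_plus. Cring.
  - intros k _. simpl binomR. rewrite RtoC_plus. Cring.
Qed.

Lemma Cpoch_shift_neq0 y m :
  (forall j, (y + RtoC (INR j))%C <> RtoC 0) ->
  forall j, (y + RtoC (INR m) + RtoC (INR j))%C <> RtoC 0.
Proof.
  intros H j. replace (y + RtoC (INR m) + RtoC (INR j))%C with (y + RtoC (INR (m + j)))%C.
  - apply H.
  - rewrite plus_INR, RtoC_plus. Cring.
Qed.

Lemma Cpoch_shift1_neq0 y :
  (forall j, (y + RtoC (INR j))%C <> RtoC 0) ->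
  forall j, (y + RtoC 1 + RtoC (INR j))%C <> RtoC 0.
Proof. intros H j. change (RtoC 1) with (RtoC (INR 1)). now apply Cpoch_shift_neq0. Qed.

Lemma Cinv_Cpoch_diff t m :
  (forall j, (t + RtoC (INR j))%C <> RtoC 0) ->
  (/ Cpoch t m - / Cpoch (t + RtoC 1) m)%C = (RtoC (INR m) / Cpoch t (S m))%C.
Proof.
  intros Ht.
  assert (Nt : t <> RtoC 0) by (rewrite <- (Cplus_0_r t); apply (Ht 0%nat)).
  assert (N1 : Cpoch (t + RtoC 1)%C m <> RtoC 0) by (apply Cpoch_neq0, Cpoch_shift1_neq0, Ht).
  assert (Nm : (t + RtoC (INR m))%C <> RtoC 0) by apply Ht.
  assert (E : Cpoch t m = (t * Cpoch (t + RtoC 1) m / (t + RtoC (INR m)))%C).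
  { rewrite <- Cpoch_S_l, Cpoch_S. Cfield. exact Nm. }
  rewrite Cpoch_S, E. Cfield. repeat split; auto.
Qed.

Definition alt_sum_inv_Cpoch (nu k : nat) (t : C) : C :=
  Csum (fun mu => RtoC (binomR nu mu) * (RtoC ((-1) ^ mu) * / Cpoch (t + RtoC (INR mu)) k))%C nu.

(* Up to sign, the [nu]-th forward difference of [t |-> 1/(t)_k]. *)
Lemma alt_sum_inv_CpochE nu k t :
  (forall j, (t + RtoC (INR j))%C <> RtoC 0) ->
  alt_sum_inv_Cpoch nu k t = (Cpoch (RtoC (INR k)) nu / Cpoch t (k + nu))%C.
Proof.
  revert t; induction nu as [|nu IH]; intros t Ht.
  - unfold alt_sum_inv_Cpoch. simpl. rewrite Nat.add_0_r, Cplus_0_r. Cfield. apply Cpoch_neq0, Ht.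
  - assert (Eshift : Csum (fun mu => RtoC (binomR nu mu) *
        (RtoC ((-1) ^ S mu) * / Cpoch (t + RtoC (INR (S mu))) k))%C nu
        = (RtoC (-1) * alt_sum_inv_Cpoch nu k (t + RtoC 1))%C).
    { unfold alt_sum_inv_Cpoch. rewrite <- Csum_mult_l. apply Csum_ext. intros mu _.
      rewrite RtoC_INR_S, <- Cplus_assoc, (Cplus_comm (RtoC 1)).
      simpl pow. rewrite RtoC_mult. Cring. }
    unfold alt_sum_inv_Cpoch at 1. rewrite Csum_binomR_S; cbv beta.
    fold (alt_sum_inv_Cpoch nu k t). rewrite Eshift.
    rewrite (IH t Ht), (IH _ (Cpoch_shift1_neq0 t Ht)), Nat.add_succ_r, Cpoch_S.
    transitivity (Cpoch (RtoC (INR k)) nu *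
      (/ Cpoch t (k + nu) - / Cpoch (t + RtoC 1) (k + nu)))%C.
    { Cfield. split; apply Cpoch_neq0; auto using Cpoch_shift1_neq0. }
    rewrite Cinv_Cpoch_diff, plus_INR, RtoC_plus by exact Ht.
    Cfield. apply Cpoch_neq0, Ht.
Qed.

Lemma Cpow_2n1_S z n : Cpow z (2 * S n + 1) = (z * z * Cpow z (2 * n + 1))%C.
Proof. replace (2 * S n + 1)%nat with (S (S (2 * n + 1))) by lia. cbn [Cpow]. Cring. Qed.

Section Coefficients.

Variable alpha : C.
Hypothesis two_alpha_nonpole : forall j, (RtoC 2 * alpha + RtoC (INR j))%C <> RtoC 0.

Definition coef_scale (nu : nat) : C :=
  (RtoC (2 ^ (nu + 1) / INR (fact nu)) * Cpoch (alpha + RtoC (1/2)) nu)%C.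

Definition coef_term (nu n mu : nat) : C :=
  (RtoC (binomR nu mu) * (RtoC ((-1) ^ mu) *
    (/ Cpoch (RtoC 2 * alpha + RtoC (INR mu)) (S nu) * Cpow (alpha + RtoC (INR mu)) (2 * n + 1))))%C.

Lemma coefE n nu : coef alpha n nu = (coef_scale nu * Csum (coef_term nu n) nu)%C.
Proof.
  unfold coef, coef_scale. rewrite Cscale_RtoC. apply (f_equal (Cmult _)).
  apply Csum_ext; intros mu Hmu. unfold coef_term.
  rewrite !Cscale_RtoC, (binomR_C nu mu Hmu), RtoC_mult, Nat.add_1_r. Cring.
Qed.

Lemma coef_scale_S m :
  (RtoC (INR (S m)) * coef_scale (S m) =
   (RtoC 2 * RtoC (INR (S m)) + RtoC 2 * alpha - RtoC 1) * coef_scale m)%C.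
Proof.
  assert (Nm : RtoC (INR (S m)) <> RtoC 0) by (apply RtoC_INR_neq0; lia).
  assert (E : RtoC (2 ^ (S m + 1) / INR (fact (S m))) =
              (RtoC 2 * RtoC (2 ^ (m + 1) / INR (fact m)) / RtoC (INR (S m)))%C).
  { rewrite <- RtoC_mult, <- RtoC_div by (apply not_0_INR; lia). f_equal.
    rewrite fact_simpl, mult_INR, Nat.add_succ_l; cbn [pow].
    field. split; [apply INR_fact_neq_0 | apply not_0_INR; lia]. }
  assert (Ehalf : RtoC (1 / 2) = (/ RtoC 2)%C)
    by (rewrite <- RtoC_inv by lra; f_equal; lra).
  unfold coef_scale. rewrite E, Cpoch_S, Ehalf, RtoC_INR_S.
  rewrite RtoC_INR_S in Nm. Cfield. exact Nm.
Qed.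

Lemma coef_term_S_S n m mu :
  coef_term (S m) (S n) mu =
  ((alpha + RtoC (INR (S m))) * (alpha + RtoC (INR (S m))) * coef_term (S m) n mu
   - RtoC (INR (S m)) * coef_term m n mu)%C.
Proof.
  assert (Nm : INR (S m) <> 0) by (apply not_0_INR; lia).
  assert (Eb : RtoC (binomR m mu) =
    (- RtoC (binomR (S m) mu) * (RtoC (INR mu) - RtoC (INR (S m))) / RtoC (INR (S m)))%C).
  { rewrite <- RtoC_minus, <- RtoC_opp, <- RtoC_mult, <- RtoC_div by exact Nm.
    f_equal. rewrite Ropp_mult_distr_l_reverse, binomR_absorb. field. exact Nm. }
  (* With [Eb], the claim reduces to
     [(alpha + mu)^2 - (alpha + m + 1)^2 = (mu - m - 1) (2 alpha + mu + m + 1)]. *)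
  unfold coef_term. rewrite Eb, Cpow_2n1_S, (Cpoch_S _ (S m)).
  assert (NP : Cpoch (RtoC 2 * alpha + RtoC (INR mu))%C (S m) <> RtoC 0)
    by (apply Cpoch_neq0, Cpoch_shift_neq0, two_alpha_nonpole).
  assert (NL : (RtoC 2 * alpha + RtoC (INR mu) + RtoC (INR (S m)))%C <> RtoC 0)
    by (apply Cpoch_shift_neq0, two_alpha_nonpole).
  Cfield. repeat split; auto. intro E; apply RtoC_inj in E; auto.
Qed.

Lemma coef_S_S n m :
  coef alpha (S n) (S m) =
  ((alpha + RtoC (INR (S m))) * (alpha + RtoC (INR (S m))) * coef alpha n (S m)
   - (RtoC 2 * RtoC (INR (S m)) + RtoC 2 * alpha - RtoC 1) * coef alpha n m)%C.
Proof.
  assert (Hlast : Csum (coef_term m n) (S m) = Csum (coef_term m n) m).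
  { rewrite Csum_S. unfold coef_term at 2. rewrite binomR_gt by lia. Cring. }
  rewrite !coefE, (Csum_ext _ _ _ (fun mu _ => coef_term_S_S n m mu)).
  rewrite Csum_minus, !Csum_mult_l, Hlast, (Cmult_assoc _ (coef_scale m)), <- coef_scale_S.
  Cring.
Qed.

Lemma coef_S_0 n : coef alpha (S n) 0 = (alpha * alpha * coef alpha n 0)%C.
Proof. rewrite !coefE. cbn [Csum]. unfold coef_term. rewrite Cpow_2n1_S. simpl INR. Cring. Qed.

Lemma alpha_neq0 : alpha <> RtoC 0.
Proof. intro E. apply (two_alpha_nonpole 0). rewrite E. simpl INR. Cring. Qed.

Lemma coef_0_0 : coef alpha 0 0 = RtoC 1.
Proof.
  rewrite coefE. unfold coef_scale, coef_term.
  cbn [Csum binomR pow Cpoch Cpow Nat.mul Nat.add INR fact].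
  replace (2 * 1 / 1) with 2 by field. Cfield. exact alpha_neq0.
Qed.

Lemma coef_0_S m : coef alpha 0 (S m) = RtoC 0.
Proof.
  set (t := (RtoC 2 * alpha)%C).
  (* [alpha + mu = (2 alpha + mu) - alpha] splits each term into two reciprocal Pochhammers. *)
  assert (Hsplit : Csum (coef_term (S m) 0) (S m) =
    (alt_sum_inv_Cpoch (S m) (S m) (t + RtoC 1) - alpha * alt_sum_inv_Cpoch (S m) (S (S m)) t)%C).
  { unfold alt_sum_inv_Cpoch. rewrite <- Csum_mult_l, <- Csum_minus.
    apply Csum_ext; intros mu _. unfold coef_term, t. cbn [Nat.mul Nat.add Cpow].
    rewrite (Cpoch_S_l _ (S m)).
    replace (RtoC 2 * alpha + RtoC 1 + RtoC (INR mu))%C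
      with (RtoC 2 * alpha + RtoC (INR mu) + RtoC 1)%C by Cring.
    assert (N1 : (RtoC 2 * alpha + RtoC (INR mu))%C <> RtoC 0) by apply two_alpha_nonpole.
    assert (N2 : Cpoch (RtoC 2 * alpha + RtoC (INR mu) + RtoC 1)%C (S m) <> RtoC 0)
      by (apply Cpoch_neq0, Cpoch_shift1_neq0, Cpoch_shift_neq0, two_alpha_nonpole).
    Cfield. auto. }
  rewrite coefE, Hsplit, !alt_sum_inv_CpochE by (exact two_alpha_nonpole ||
    exact (Cpoch_shift1_neq0 _ two_alpha_nonpole)).
  replace (S (S m) + S m)%nat with (S (S m + S m)) by lia.
  rewrite (Cpoch_S_l t (S m + S m)), <- Cpoch_nat_double.
  assert (NQ : Cpoch (t + RtoC 1)%C (S m + S m) <> RtoC 0)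
    by (apply Cpoch_neq0, Cpoch_shift1_neq0, two_alpha_nonpole).
  unfold t in *. Cfield. split; [exact NQ | exact alpha_neq0].
Qed.

Lemma coef_gt n nu : (n < nu)%nat -> coef alpha n nu = RtoC 0.
Proof.
  revert nu; induction n as [|n IH]; intros [|nu] H; try lia.
  - apply coef_0_S.
  - rewrite coef_S_S, !IH by lia. Cring.
Qed.

End Coefficients.

Definition Cpoly (q : nat -> C) (m : nat) (x : R) : C :=
  Csum (fun k => RtoC (x ^ k) * q k)%C m.
Definition Cpoly_deriv (q : nat -> C) (m : nat) (x : R) : C :=
  Csum (fun k => RtoC (INR k * x ^ pred k) * q k)%C m.
Definition Cpoly_deriv2 (q : nat -> C) (m : nat) (x : R) : C :=
  Csum (fun k => RtoC (INR k * INR (pred k) * x ^ pred (pred k)) * q k)%C m.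

Section PolynomialOperator.

Variable alpha : C.

(* Coefficients of [x^2 P'' + ((2 alpha + 1) x - 2 x^2) P' + (alpha^2 - (2 alpha + 1) x) P]. *)
Definition poly_op_coef (c : nat -> C) (k : nat) : C :=
  match k with
  | O => (alpha * alpha * c 0%nat)%C
  | S j => ((alpha + RtoC (INR (S j))) * (alpha + RtoC (INR (S j))) * c (S j)
            - (RtoC 2 * RtoC (INR (S j)) + RtoC 2 * alpha - RtoC 1) * c j)%C
  end.

Lemma Cpoly_op (c : nat -> C) m x : c (S m) = RtoC 0 ->
  (RtoC (x ^ 2) * Cpoly_deriv2 c m x
   + ((RtoC 2 * alpha + RtoC 1) * RtoC x - RtoC 2 * RtoC (x ^ 2)) * Cpoly_deriv c m x
   + (alpha * alpha - (RtoC 2 * alpha + RtoC 1) * RtoC x) * Cpoly c m x)%C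
  = Cpoly (poly_op_coef c) (S m) x.
Proof.
  intros Hc.
  set (A := fun k => (RtoC (x ^ k) * ((alpha + RtoC (INR k)) * (alpha + RtoC (INR k)) * c k))%C).
  set (B := fun k => (RtoC (x ^ S k) * ((RtoC 2 * RtoC (INR k) + RtoC 2 * alpha + RtoC 1) * c k))%C).
  transitivity (Csum A m - Csum B m)%C.
  { unfold Cpoly, Cpoly_deriv, Cpoly_deriv2. rewrite <- Csum_minus, <- !Csum_mult_l, <- !Csum_plus.
    apply Csum_ext. intros [|[|k]] _; unfold A, B; cbn [pred pow]; rewrite ?S_INR;
      simpl INR; rewrite ?RtoC_mult, ?RtoC_plus; Cring. }
  assert (EA : Csum A m = (A 0%nat + Csum (fun k => A (S k)) m)%C).
  { rewrite <- Csum_shift, Csum_S. unfold A. rewrite Hc. Cring. }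
  unfold Cpoly. rewrite EA, Csum_shift.
  transitivity (A 0%nat + (Csum (fun k => A (S k)) m - Csum B m))%C; [Cring|].
  rewrite <- Csum_minus. f_equal.
  - unfold A. cbn [poly_op_coef]. simpl INR. Cring.
  - apply Csum_ext. intros k _. unfold A, B. cbn [poly_op_coef]. rewrite RtoC_INR_S. Cring.
Qed.

End PolynomialOperator.

Lemma Cpoly_coef_S alpha (two_alpha_nonpole : forall j, (RtoC 2 * alpha + RtoC (INR j))%C <> RtoC 0) n x :
  (RtoC (x ^ 2) * Cpoly_deriv2 (coef alpha n) n x
   + ((RtoC 2 * alpha + RtoC 1) * RtoC x - RtoC 2 * RtoC (x ^ 2)) * Cpoly_deriv (coef alpha n) n x
   + (alpha * alpha - (RtoC 2 * alpha + RtoC 1) * RtoC x) * Cpoly (coef alpha n) n x)%C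
  = Cpoly (coef alpha (S n)) (S n) x.
Proof.
  rewrite Cpoly_op by (apply coef_gt; auto).
  apply Csum_ext. intros [|k] _; cbn [poly_op_coef].
  - rewrite coef_S_0 by exact two_alpha_nonpole. reflexivity.
  - rewrite coef_S_S by exact two_alpha_nonpole. reflexivity.
Qed.

Section ComplexDerivatives.

Implicit Types (f g : R -> C) (x : R) (df dg : C).

Lemma Cderiv_eq f x df dg : Cderiv f x df -> df = dg -> Cderiv f x dg.
Proof. now intros H <-. Qed.

Lemma Cderiv_const (z : C) x : Cderiv (fun _ => z) x (RtoC 0).
Proof. split; simpl; apply derivable_pt_lim_const. Qed.

Lemma Cderiv_RtoC (r : R -> R) x dr :
  derivable_pt_lim r x dr -> Cderiv (fun t => RtoC (r t)) x (RtoC dr).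
Proof. intros H. split; [exact H | apply derivable_pt_lim_const]. Qed.

Lemma Cderiv_plus f g x df dg :
  Cderiv f x df -> Cderiv g x dg -> Cderiv (fun t => f t + g t)%C x (df + dg)%C.
Proof. intros [F1 F2] [G1 G2]. split; now apply derivable_pt_lim_plus. Qed.

Lemma Cderiv_mult f g x df dg :
  Cderiv f x df -> Cderiv g x dg ->
  Cderiv (fun t => f t * g t)%C x (df * g x + f x * dg)%C.
Proof.
  intros [F1 F2] [G1 G2]. split; simpl.
  - replace (fst df * fst (g x) - snd df * snd (g x) + (fst (f x) * fst dg - snd (f x) * snd dg))
      with (fst df * fst (g x) + fst (f x) * fst dg - (snd df * snd (g x) + snd (f x) * snd dg))
      by ring.
    apply derivable_pt_lim_minus; now apply derivable_pt_lim_mult.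
  - replace (fst df * snd (g x) + snd df * fst (g x) + (fst (f x) * snd dg + snd (f x) * fst dg))
      with (fst df * snd (g x) + fst (f x) * snd dg + (snd df * fst (g x) + snd (f x) * fst dg))
      by ring.
    apply derivable_pt_lim_plus; now apply derivable_pt_lim_mult.
Qed.

Lemma Cderiv_Csum (F : nat -> R -> C) (dF : nat -> C) x m :
  (forall k, Cderiv (F k) x (dF k)) -> Cderiv (fun t => Csum (fun k => F k t) m) x (Csum dF m).
Proof.
  intros H. induction m as [|m IH]; [exact (H 0%nat)|].
  exact (Cderiv_plus _ (F (S m)) x _ _ IH (H (S m))).
Qed.

Lemma Cderiv_ext_pos f g x df :
  0 < x -> (forall t, 0 < t -> f t = g t) -> Cderiv f x df -> Cderiv g x df.
Proof.
  intros Hx E [F1 F2].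
  assert (L : forall h : C -> R, locally x (fun t => h (f t) = h (g t))).
  { intro h. apply (locally_interval _ x (Finite 0) p_infty); simpl; auto.
    intros y Hy _. now rewrite E. }
  apply is_derive_Reals in F1, F2.
  split; apply is_derive_Reals; eapply is_derive_ext_loc; eauto; apply L.
Qed.

End ComplexDerivatives.

Lemma Cderiv_cpow_real a x : 0 < x ->
  Cderiv (fun t => cpow_real t a) x (a * RtoC (/ x) * cpow_real x a)%C.
Proof.
  intros Hx. destruct a as [a b]. unfold cpow_real, Re, Im.
  split; simpl; apply is_derive_Reals; auto_derive; auto; field; lra.
Qed.

Lemma Cderiv_Cpoly q m x : Cderiv (Cpoly q m) x (Cpoly_deriv q m x).
Proof.
  apply (Cderiv_Csum (fun k t => RtoC (t ^ k) * q k)%C). intro k.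
  eapply Cderiv_eq.
  - apply Cderiv_mult; [apply Cderiv_RtoC, derivable_pt_lim_pow | apply Cderiv_const].
  - Cring.
Qed.

Lemma Cderiv_Cpoly1 q m x : Cderiv (Cpoly_deriv q m) x (Cpoly_deriv2 q m x).
Proof.
  apply (Cderiv_Csum (fun k t => RtoC (INR k * t ^ pred k) * q k)%C). intro k.
  eapply Cderiv_eq.
  - apply Cderiv_mult; [|apply Cderiv_const].
    apply Cderiv_RtoC, derivable_pt_lim_scal, derivable_pt_lim_pow.
  - rewrite Rmult_assoc. Cring.
Qed.

Section SeedIterates.

Variable alpha : C.
Hypothesis two_alpha_nonpole : forall j, (RtoC 2 * alpha + RtoC (INR j))%C <> RtoC 0.

Definition seed_logderiv (t : R) : C := (alpha * RtoC (/ t) - RtoC 1)%C.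

Lemma Cderiv_seed x : 0 < x -> Cderiv (seed alpha) x (seed alpha x * seed_logderiv x)%C.
Proof.
  intros Hx.
  apply (Cderiv_ext_pos (fun t => RtoC (exp (- t)) * cpow_real t alpha)%C);
    [exact Hx | intros t _; unfold seed; now rewrite Cscale_RtoC |].
  eapply Cderiv_eq.
  - apply Cderiv_mult; [|now apply Cderiv_cpow_real].
    apply Cderiv_RtoC, is_derive_Reals. auto_derive; auto.
  - unfold seed, seed_logderiv. rewrite Cscale_RtoC, RtoC_mult, RtoC_opp. Cring.
Qed.

Lemma Cderiv_seed_logderiv x :
  0 < x -> Cderiv seed_logderiv x (- alpha * RtoC (/ x) * RtoC (/ x))%C.
Proof.
  intros Hx. eapply Cderiv_eq.
  - apply Cderiv_plus; [|apply Cderiv_const].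
    apply Cderiv_mult; [apply Cderiv_const|].
    apply Cderiv_RtoC, is_derive_Reals. auto_derive; [lra | reflexivity].
  - replace (- (1) * / (x * x)) with (- (/ x * / x)) by (field; lra).
    rewrite RtoC_opp, RtoC_mult. Cring.
Qed.

Definition seedA (n : nat) (t : R) : C :=
  (RtoC ((-1) ^ n) * (seed alpha t * Cpoly (coef alpha n) n t))%C.
Definition seedA_deriv (n : nat) (t : R) : C :=
  (RtoC ((-1) ^ n) * (seed alpha t * seed_logderiv t * Cpoly (coef alpha n) n t
                      + seed alpha t * Cpoly_deriv (coef alpha n) n t))%C.
Definition seedA_deriv2 (n : nat) (t : R) : C :=
  (RtoC ((-1) ^ n) *
   (seed alpha t * (seed_logderiv t * seed_logderiv t - alpha * RtoC (/ t) * RtoC (/ t))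
      * Cpoly (coef alpha n) n t
    + RtoC 2 * seed alpha t * seed_logderiv t * Cpoly_deriv (coef alpha n) n t
    + seed alpha t * Cpoly_deriv2 (coef alpha n) n t))%C.

Lemma Cderiv_seedA n x : 0 < x -> Cderiv (seedA n) x (seedA_deriv n x).
Proof.
  intros Hx. eapply Cderiv_eq.
  - apply Cderiv_mult; [apply Cderiv_const|].
    apply Cderiv_mult; [now apply Cderiv_seed | apply Cderiv_Cpoly].
  - unfold seedA_deriv. Cring.
Qed.

Lemma Cderiv_seedA1 n x : 0 < x -> Cderiv (seedA_deriv n) x (seedA_deriv2 n x).
Proof.
  intros Hx. eapply Cderiv_eq.
  - apply Cderiv_mult; [apply Cderiv_const|].
    apply Cderiv_plus; apply Cderiv_mult;
      try apply Cderiv_mult; auto using Cderiv_seed, Cderiv_seed_logderiv, Cderiv_Cpoly, Cderiv_Cpoly1.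
  - unfold seedA_deriv2. Cring.
Qed.

Lemma Aop_seedA n x : 0 < x -> Aop (seedA n) (seedA_deriv n) (seedA_deriv2 n) x = seedA (S n) x.
Proof.
  intros Hx.
  assert (Nx : RtoC x <> RtoC 0) by (intro E; apply RtoC_inj in E; lra).
  change (seedA (S n) x) with
    (RtoC ((-1) ^ S n) * (seed alpha x * Cpoly (coef alpha (S n)) (S n) x))%C.
  rewrite <- Cpoly_coef_S by exact two_alpha_nonpole.
  unfold Aop, seedA, seedA_deriv, seedA_deriv2, seed_logderiv.
  replace (RtoC ((-1) ^ S n)) with (- RtoC ((-1) ^ n))%C
    by (rewrite <- RtoC_opp; f_equal; simpl; ring).
  rewrite !Cscale_RtoC, (RtoC_inv x), !RtoC_opp by lra.
  replace (RtoC (x ^ 2)) with (RtoC x * RtoC x)%C by (rewrite <- RtoC_mult; f_equal; ring).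
  Cfield. exact Nx.
Qed.

End SeedIterates.

Lemma Aiter_seedA alpha (two_alpha_nonpole : forall j, (RtoC 2 * alpha + RtoC (INR j))%C <> RtoC 0) n :
  exists g, Aiter (seed alpha) n g /\ forall x, 0 < x -> g x = seedA alpha n x.
Proof.
  induction n as [|n [g [Ag Eg]]].
  - exists (seed alpha). split; [constructor|]. intros x _.
    unfold seedA, Cpoly. cbn [Csum]. rewrite coef_0_0 by exact two_alpha_nonpole. simpl pow. Cring.
  - exists (Aop g (seedA_deriv alpha n) (seedA_deriv2 alpha n)). split.
    + apply AiterS; [exact Ag | |].
      * intros x Hx. apply (Cderiv_ext_pos (seedA alpha n)); auto using Cderiv_seedA.
        intros t Ht. symmetry. auto.
      * intros x Hx. now apply Cderiv_seedA1.
    + intros x Hx. rewrite <- Aop_seedA by assumption. unfold Aop. now rewrite Eg.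
Qed.

Lemma two_alpha_nonpole_of_Re alpha : -1/2 < Re alpha -> alpha <> (0, 0) ->
  forall j, (RtoC 2 * alpha + RtoC (INR j))%C <> RtoC 0.
Proof.
  destruct alpha as [a b]; unfold Re; simpl fst; intros Hre Hnz j E.
  unfold Cmult, Cplus, RtoC in E; cbn [fst snd] in E; injection E as E1 E2.
  destruct j as [|j].
  - apply Hnz. simpl INR in E1. f_equal; lra.
  - pose proof (pos_INR j). rewrite S_INR in E1. lra.
Qed.

Lemma cpow_real_opp_mult a x : (cpow_real x (Cneg a) * cpow_real x a)%C = RtoC 1.
Proof.
  destruct a as [a b]. unfold cpow_real, Cneg, Re, Im, Cmult, RtoC; simpl.
  rewrite !Ropp_mult_distr_l_reverse, cos_neg, sin_neg, exp_Ropp.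
  pose proof (exp_pos (a * ln x)) as Hexp. pose proof (sin2_cos2 (b * ln x)) as H. unfold Rsqr in H.
  f_equal; [rewrite <- H |]; field; lra.
Qed.

Lemma seedA_normalize alpha n x : 0 < x ->
  (RtoC ((-1) ^ n * exp x) * cpow_real x (Cneg alpha) * seedA alpha n x)%C
  = Cpoly (coef alpha n) n x.
Proof.
  intros Hx.
  assert (Hsign : (-1) ^ n * exp x * ((-1) ^ n * exp (- x)) = 1).
  { replace ((-1) ^ n * exp x * ((-1) ^ n * exp (- x)))
      with ((-1 * -1) ^ n * (exp x * exp (- x))) by (rewrite Rpow_mult_distr; ring).
    rewrite <- exp_plus, Rplus_opp_r, exp_0, Rmult_1_r.
    replace (-1 * -1) with 1 by ring. apply pow1. }
  unfold seedA, seed. rewrite Cscale_RtoC.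
  transitivity (RtoC ((-1) ^ n * exp x * ((-1) ^ n * exp (- x))) *
    (cpow_real x (Cneg alpha) * cpow_real x alpha) * Cpoly (coef alpha n) n x)%C.
  { rewrite !RtoC_mult. Cring. }
  rewrite Hsign, cpow_real_opp_mult. Cring.
Qed.

Theorem lemma2p2 (alpha : Cx) (Hre : -1/2 < Re alpha) (Hnz : alpha <> (0, 0))
  (n : nat) :
  exists g : R -> Cx, Aiter (seed alpha) n g /\
    forall x : R, 0 < x ->
      Cmul (Cscale ((-1) ^ n * exp x) (cpow_real x (Cneg alpha))) (g x)
      = Csum (fun nu => Cscale (x ^ nu) (coef alpha n nu)) n.
Proof.
  destruct (Aiter_seedA alpha (two_alpha_nonpole_of_Re alpha Hre Hnz) n) as [g [Ag Eg]].
  exists g. split; [exact Ag|]. intros x Hx.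
  rewrite Eg, Cscale_RtoC by exact Hx. change Cmul with Cmult.
  rewrite seedA_normalize by exact Hx.
  apply Csum_ext. intros k _. now rewrite Cscale_RtoC.
Qed.
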